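(* Let $X$ be a real Banach space, $k\in\mathbb N$, and $Y,Z$ closed subspaces with $Z\subseteq Y\subseteq X$. Suppose $Z$ is an $M$-ideal in $X$ and $Y/Z$ has property-$(k-U)$ in $X/Z$. Then $Y$ has property-$(k-U)$ in $X$.
   Context: $Z^\perp=\{x^*\in X^*:x^*|_Z=0\}$. $Z$ is an $M$-ideal in $X$ if there is a closed subspace $G$ of $X^*$ with $X^*=Z^\perp\oplus G$ and $\|u+g\|=\|u\|+\|g\|$ for $u\in Z^\perp,g\in G$. For a closed subspace $V$ of $E$ and $v^*\in V^*$, $HB(v^* )=\{e^*\in E^*:e^*|_V=v^*,\ \|e^*\|=\|v^*\|\}$; for a set $A$ and $a\in A$, $\dim A=\dim\operatorname{span}(A-a)$. $V$ has property-$(k-U)$ in $E$ if $\dim HB(v^* )\le k-1$ for all $v^*\in S_{V^*}$. $Y/Z$ is regarded as a subspace of $X/Z$ with the quotient norm. *)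

From HB Require Import structures.
From mathcomp Require Import all_boot all_order all_algebra.
From mathcomp Require Import all_classical all_reals all_analysis.
Set Implicit Arguments. Unset Strict Implicit. Unset Printing Implicit Defensive.
Import Order.TTheory GRing.Theory Num.Theory.
Import numFieldNormedType.Exports.
Local Open Scope classical_set_scope.
Local Open Scope ring_scope.

Section Defs.
Context {R : realType} {X : normedModType R}.

Definition is_subspace (V : set X) : Prop :=
  V 0 /\ forall (a : R) (x y : X), V x -> V y -> V (a *: x + y).

(* Functionals on X are functions X -> R.  The ambient space is X equipped
   with a seminorm p: p = norm gives X itself, p = qnorm Z gives the
   quotient X/Z (functionals bounded w.r.t. qnorm Z are exactly the
   compositions of functionals on X/Z with the quotient map). *)

Definition fun_on (V : set X) (p : X -> R) (f : X -> R) : Prop :=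
  (forall (a : R) (x y : X), V x -> V y -> f (a *: x + y) = a * f x + f y) /\
  exists C : R, forall x, V x -> `|f x| <= C * p x.

Definition dual (p : X -> R) (f : X -> R) : Prop := fun_on setT p f.

Definition opnorm (V : set X) (p : X -> R) (f : X -> R) : R :=
  sup [set `|f x| | x in [set x | V x /\ p x <= 1]].

Definition qnorm (Z : set X) (x : X) : R := inf [set `|x - z| | z in Z].

Definition HB (V : set X) (p : X -> R) (f : X -> R) : set (X -> R) :=
  [set g | dual p g /\ (forall v, V v -> g v = f v) /\
           opnorm setT p g = opnorm V p f].

(* dim A <= n, where dim A = dim span (A - a), a in A *)
Definition dim_le (A : set (X -> R)) (n : nat) : Prop :=
  forall a, A a -> exists gs : 'I_n -> X -> R,
    forall b, A b -> exists c : 'I_n -> R,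
      forall x, b x - a x = \sum_(i < n) c i * gs i x.

Definition propkU (V : set X) (p : X -> R) (k : nat) : Prop :=
  forall f, fun_on V p f -> opnorm V p f = 1 -> dim_le (HB V p f) k.-1.

Definition dnorm (f : X -> R) : R := opnorm setT (fun x => `|x|) f.

Definition perp (Z : set X) : set (X -> R) :=
  [set f | dual (fun x => `|x|) f /\ forall z, Z z -> f z = 0].

Definition M_ideal (Z : set X) : Prop :=
  exists G : set (X -> R),
    (forall g, G g -> dual (fun x => `|x|) g) /\
    G (fun _ => 0) /\
    (forall (a : R) g h, G g -> G h -> G (fun x => a * g x + h x)) /\
    (forall (gs : nat -> X -> R) g, (forall n, G (gs n)) ->
       dual (fun x => `|x|) g ->
       (fun n => dnorm (fun x => gs n x - g x)) @ \oo --> (0 : R) -> G g) /\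
    (forall f, dual (fun x => `|x|) f ->
       exists u g, perp Z u /\ G g /\ f = (fun x => u x + g x)) /\
    (forall f, perp Z f -> G f -> f = (fun _ => 0)) /\
    (forall u g, perp Z u -> G g ->
       dnorm (fun x => u x + g x) = dnorm u + dnorm g).

End Defs.

From HB Require Import structures.
From mathcomp Require Import all_boot all_order all_algebra.
From mathcomp Require Import all_classical all_reals all_analysis.
Import Order.TTheory GRing.Theory Num.Theory.
Import numFieldNormedType.Exports.
From mathcomp Require Import lra.
Set Implicit Arguments. Unset Strict Implicit. Unset Printing Implicit Defensive.
Local Open Scope classical_set_scope.
Local Open Scope ring_scope.

(* Write X^* = Z^perp (+)_1 G.  Two Hahn-Banach extensions of the same
   f in S_{Y^*} agree on Z, so their G-components coincide, and by the
   L-decomposition their Z^perp-components u all have the same norm c.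
   If c = 0, HB(f) is a single point.  Otherwise the functionals u / c live
   on X/Z, where a functional vanishing on Z has the same norm as on X; hence
   they are norm-preserving extensions of the norm-one functional u_a / c on
   Y/Z, and HB(f) is an affine image of a set of dimension at most k - 1. *)

Section Functionals.
Context {R : realType} {X : normedModType R}.
Implicit Types (V W Y : set X) (p : X -> R) (f g h u v : X -> R).

Definition linear_functional f :=
  forall (a : R) (x y : X), f (a *: x + y) = a * f x + f y.

Lemma linear_functional0 f : linear_functional f -> f 0 = 0.
Proof.
move=> lf; have := lf 1 0 0; rewrite scale1r addr0 mul1r.
by move/(congr1 (fun t => t - f 0)); rewrite addrK subrr => ->.
Qed.

Lemma linear_functionalZ f a x : linear_functional f -> f (a *: x) = a * f x.
Proof.
by move=> lf; have := lf a x 0; rewrite !addr0 (linear_functional0 lf) addr0.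
Qed.

Lemma linear_functionalB f x y : linear_functional f -> f (x - y) = f x - f y.
Proof.
move=> lf; have := lf (-1) y x.
by rewrite scaleN1r mulN1r addrC => ->; rewrite addrC.
Qed.

Lemma dual_linear p f : dual p f -> linear_functional f.
Proof. by move=> [lf _] a x y; exact: lf. Qed.

Lemma fun_on_subset V W p f : V `<=` W -> fun_on W p f -> fun_on V p f.
Proof.
move=> VW [lf [C hC]]; split; first by move=> a x y /VW Wx /VW Wy; exact: lf.
by exists C => x /VW; exact: hC.
Qed.

Lemma subspaceB V x y : is_subspace V -> V x -> V y -> V (x - y).
Proof.
by move=> [_ hV] Vx Vy; have := hV (-1) y x Vy Vx; rewrite scaleN1r addrC.
Qed.

Definition ball_bounded V p f :=
  exists C : R, forall x, V x -> p x <= 1 -> `|f x| <= C.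

Lemma ball_bounded_le V p f C : (forall x, 0 <= p x) ->
  (forall x, V x -> `|f x| <= C * p x) -> ball_bounded V p f.
Proof.
move=> p_ge0 hC; exists `|C| => x Vx px; apply: (le_trans (hC x Vx)).
apply: (le_trans (ler_norm _)); rewrite normrM (ger0_norm (p_ge0 x)).
by rewrite -[leRHS]mulr1 ler_wpM2l.
Qed.

Lemma opnorm_ge V p f x : ball_bounded V p f -> V x -> p x <= 1 ->
  `|f x| <= opnorm V p f.
Proof.
move=> [C hC] Vx px; apply: ub_le_sup; last by exists x.
by exists C => _ [y [Vy py] <-]; exact: hC.
Qed.

Section Opnorm.
Variable p : X -> R.
Hypothesis p0_le1 : p 0 <= 1.

Lemma opnorm_le V f M : V 0 ->
  (forall x, V x -> p x <= 1 -> `|f x| <= M) -> opnorm V p f <= M.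
Proof.
move=> V0 hM; apply: ge_sup; first by exists `|f 0|, 0.
by move=> _ [y [Vy py] <-]; exact: hM.
Qed.

Lemma opnorm_ge0 V f : linear_functional f -> ball_bounded V p f -> V 0 ->
  0 <= opnorm V p f.
Proof.
move=> lf bf V0; have := opnorm_ge bf V0 p0_le1.
by rewrite (linear_functional0 lf) normr0.
Qed.

Lemma opnorm_subset V W f : V `<=` W -> V 0 -> ball_bounded W p f ->
  opnorm V p f <= opnorm W p f.
Proof.
by move=> VW V0 bf; apply: opnorm_le => // x /VW Wx px; exact: opnorm_ge.
Qed.

Lemma opnorm_add_le V f g h : V 0 -> (forall x, V x -> f x = g x + h x) ->
  ball_bounded V p g -> ball_bounded V p h ->
  opnorm V p f <= opnorm V p g + opnorm V p h.
Proof.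
move=> V0 fE bg bh; apply: opnorm_le => // x Vx px.
rewrite fE //; apply: (le_trans (ler_normD _ _)).
by apply: lerD; exact: opnorm_ge.
Qed.

Lemma opnorm_divr V f c : V 0 -> 0 < c -> ball_bounded V p f ->
  opnorm V p (fun x => f x / c) = opnorm V p f / c.
Proof.
move=> V0 c_gt0 bf; have c'_ge0 : 0 <= c^-1 by rewrite invr_ge0 ltW.
have normE x : `|f x / c| = `|f x| / c by rewrite normrM (ger0_norm c'_ge0).
have bfc : ball_bounded V p (fun x => f x / c).
  have [C hC] := bf; exists (C / c) => x Vx px.
  by rewrite normE ler_wpM2r // hC.
apply/le_anti/andP; split.
  apply: opnorm_le => // x Vx px; rewrite normE ler_wpM2r //.
  exact: opnorm_ge.
rewrite ler_pdivrMr //; apply: opnorm_le => // x Vx px.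
by rewrite -ler_pdivrMr // -normE; exact: (opnorm_ge bfc).
Qed.

End Opnorm.

Lemma opnorm_homog V u y : is_subspace V -> linear_functional u ->
  ball_bounded V (fun x => `|x|) u -> V y ->
  `|u y| <= opnorm V (fun x => `|x|) u * `|y|.
Proof.
move=> [V0 hV] lu bu Vy.
have [->|y_neq0] := eqVneq y 0.
  by rewrite linear_functional0 // !normr0 mulr0.
have y_gt0 : 0 < `|y| by rewrite normr_gt0.
rewrite -ler_pdivrMr //.
have Vy' : V (`|y|^-1 *: y) by have := hV `|y|^-1 y 0 Vy V0; rewrite addr0.
have n1 : `|(`|y|^-1 *: y)| <= 1 by rewrite normfZV.
have := opnorm_ge bu Vy' n1.
by rewrite linear_functionalZ // normrM normfV normr_id mulrC.
Qed.

Lemma dual_norm_le u : dual (fun x => `|x|) u ->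
  exists2 C, 0 <= C & forall x, `|u x| <= C * `|x|.
Proof.
move=> [_ [C hC]]; exists `|C| => // x; apply: (le_trans (hC x I)).
by rewrite ler_wpM2r // ler_norm.
Qed.

Lemma dual_ball_bounded V u : dual (fun x => `|x|) u ->
  ball_bounded V (fun x => `|x|) u.
Proof.
by move=> /dual_norm_le [C _ hC]; apply: (@ball_bounded_le _ _ _ C) => // x _.
Qed.

Lemma dnorm_le0 u : dual (fun x => `|x|) u -> dnorm u <= 0 -> forall x, u x = 0.
Proof.
move=> du un_le0 x; apply/eqP; rewrite -normr_le0.
have sT : is_subspace (@setT X) by [].
have := opnorm_homog sT (dual_linear du) (dual_ball_bounded setT du) (I : setT x).
by move/le_trans; apply; rewrite mulr_le0_ge0.
Qed.

Lemma opnorm_restrict_eq_dnorm Y f u g : Y 0 ->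
  dual (fun x => `|x|) u -> dual (fun x => `|x|) g ->
  (forall y, Y y -> f y = u y + g y) ->
  dnorm u + dnorm g <= opnorm Y (fun x => `|x|) f ->
  opnorm Y (fun x => `|x|) u = dnorm u.
Proof.
move=> Y0 du dg fE f_ge; have n0 : `|0 : X| <= 1 by rewrite normr0.
have bu := dual_ball_bounded setT du; have bg := dual_ball_bounded setT dg.
have := opnorm_add_le n0 Y0 fE (dual_ball_bounded Y du) (dual_ball_bounded Y dg).
have := opnorm_subset n0 (subsetT Y) Y0 bu.
have := opnorm_subset n0 (subsetT Y) Y0 bg.
rewrite /dnorm in f_ge *; lra.
Qed.

Section Quotient.
Variable Z : set X.
Hypothesis sZ : is_subspace Z.

Lemma qnorm_ge0 x : 0 <= qnorm Z x.
Proof.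
have Z0 := sZ.1.
by apply: lb_le_inf; [exists `|x - 0|, 0 | move=> _ [z _ <-]].
Qed.

Lemma qnorm_le x z : Z z -> qnorm Z x <= `|x - z|.
Proof. by move=> Zz; apply: ge_inf; [exists 0 => _ [w _ <-] | exists z]. Qed.

Lemma qnorm_le_norm x : qnorm Z x <= `|x|.
Proof. by have := qnorm_le x sZ.1; rewrite subr0. Qed.

Lemma qnorm0 : qnorm Z 0 = 0.
Proof. by apply/le_anti; rewrite qnorm_ge0 andbT -(normr0 X) qnorm_le_norm. Qed.

Lemma qnorm0_le1 : qnorm Z 0 <= 1.
Proof. by rewrite qnorm0. Qed.

Lemma perp_le_qnorm V u C x : is_subspace V -> Z `<=` V -> perp Z u ->
  0 <= C -> (forall y, V y -> `|u y| <= C * `|y|) -> V x ->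
  `|u x| <= C * qnorm Z x.
Proof.
move=> sV ZV [du uZ] C_ge0 hC Vx.
have uE z : Z z -> u x = u (x - z).
  by move=> Zz; rewrite (linear_functionalB x z (dual_linear du)) (uZ z Zz) subr0.
have [C_gt0|C_le0] := ltrP 0 C; last first.
  have C0 : C = 0 by apply/le_anti; rewrite C_le0 C_ge0.
  by move: (hC x Vx); rewrite C0 !mul0r.
rewrite -ler_pdivrMl //; apply: lb_le_inf; first by exists `|x - 0|, 0; first exact: sZ.1.
move=> _ [z Zz <-]; rewrite ler_pdivrMl // (uE z Zz).
by apply: hC; apply: subspaceB => //; exact: ZV.
Qed.

Lemma perp_qnorm_le u : perp Z u ->
  exists2 C, 0 <= C & forall x, `|u x| <= C * qnorm Z x.
Proof.
move=> pu; have [C C_ge0 hC] := dual_norm_le pu.1.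
by exists C => // x; apply: (perp_le_qnorm _ (subsetT Z)) => // y _.
Qed.

Lemma perp_ball_bounded V u : perp Z u -> ball_bounded V (qnorm Z) u.
Proof.
move=> /perp_qnorm_le [C _ hC].
by apply: (@ball_bounded_le _ _ _ C) => [x|x _]; [exact: qnorm_ge0 | exact: hC].
Qed.

Lemma opnorm_qnorm_perp V u : is_subspace V -> Z `<=` V -> perp Z u ->
  opnorm V (qnorm Z) u = opnorm V (fun x => `|x|) u.
Proof.
move=> sV ZV pu; have n0 : `|0 : X| <= 1 by rewrite normr0.
have lu := dual_linear pu.1; have bu := dual_ball_bounded V pu.1.
set M := opnorm V (fun x => `|x|) u.
have M_ge0 : 0 <= M := opnorm_ge0 n0 lu bu sV.1.
apply/le_anti/andP; split.
  apply: (opnorm_le qnorm0_le1 sV.1) => x Vx qx.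
  apply: (le_trans (perp_le_qnorm sV ZV pu M_ge0 _ Vx)).
    by move=> y Vy; exact: opnorm_homog.
  by rewrite -[leRHS]mulr1 ler_wpM2l.
apply: (opnorm_le n0 sV.1) => x Vx nx.
apply: (opnorm_ge (perp_ball_bounded V pu) Vx).
exact: le_trans (qnorm_le_norm x) nx.
Qed.

Lemma dual_qnorm_divr u c : perp Z u -> dual (qnorm Z) (fun x => u x / c).
Proof.
move=> pu; split=> [a x y _ _|]; first by rewrite (dual_linear pu.1) mulrDl mulrA.
have [C _ hC] := perp_qnorm_le pu; exists (C * `|c^-1|) => x _.
by rewrite normrM mulrAC ler_wpM2r.
Qed.

Lemma opnorm_qnorm_divr V u c : is_subspace V -> Z `<=` V -> perp Z u ->
  0 < c -> opnorm V (fun x => `|x|) u = c ->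
  opnorm V (qnorm Z) (fun x => u x / c) = 1.
Proof.
move=> sV ZV pu c_gt0 uV.
rewrite (opnorm_divr qnorm0_le1 sV.1 c_gt0 (perp_ball_bounded V pu)).
by rewrite opnorm_qnorm_perp // uV divff // gt_eqF.
Qed.

Lemma HB_qnorm_divr Y u v c : is_subspace Y -> Z `<=` Y ->
  perp Z u -> perp Z v -> 0 < c ->
  opnorm Y (fun x => `|x|) u = c -> dnorm v = c ->
  (forall y, Y y -> v y = u y) ->
  HB Y (qnorm Z) (fun x => u x / c) (fun x => v x / c).
Proof.
move=> sY ZY pu pv c_gt0 uY vn vY; split; first exact: dual_qnorm_divr.
split; first by move=> y Yy; rewrite vY.
by rewrite !opnorm_qnorm_divr //; exact: subsetT.
Qed.

End Quotient.

Section MIdeal.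
Variables (Z : set X) (G : set (X -> R)).
Hypothesis G_dual : forall g, G g -> dual (fun x => `|x|) g.
Hypothesis G_lin : forall a g h, G g -> G h -> G (fun x => a * g x + h x).
Hypothesis dual_decomp : forall f, dual (fun x => `|x|) f ->
  exists u g, perp Z u /\ G g /\ f = (fun x => u x + g x).
Hypothesis perp_G : forall f, perp Z f -> G f -> f = (fun _ => 0).
Hypothesis dnorm_perpD : forall u g, perp Z u -> G g ->
  dnorm (fun x => u x + g x) = dnorm u + dnorm g.

Lemma G_component_unique u1 u2 g1 g2 : perp Z u1 -> perp Z u2 -> G g1 -> G g2 ->
  (forall z, Z z -> u1 z + g1 z = u2 z + g2 z) -> g1 = g2.
Proof.
move=> pu1 pu2 Gg1 Gg2 E; have Gd := G_lin (-1) Gg1 Gg2.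
have pd : perp Z (fun x => -1 * g1 x + g2 x).
  split; first exact: G_dual.
  move=> z Zz; have := E z Zz; rewrite pu1.2 // pu2.2 // !add0r => ->.
  by rewrite mulN1r addNr.
apply/funext => x; have /(congr1 (fun F => F x)) /= /eqP := perp_G pd Gd.
by rewrite mulN1r addrC subr_eq0 => /eqP.
Qed.

Lemma HB_decomp Y f ua ga b : Z `<=` Y -> perp Z ua -> G ga ->
  HB Y (fun x => `|x|) f (fun x => ua x + ga x) -> HB Y (fun x => `|x|) f b ->
  exists2 ub, perp Z ub & [/\ b = (fun x => ub x + ga x),
    dnorm ub = dnorm ua & forall y, Y y -> ub y = ua y].
Proof.
move=> ZY pua Gga [_ [aY an]] [bd [bY bn]].
have [ub [gb [pub [Ggb bE]]]] := dual_decomp bd; subst b.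
have agree y : Y y -> ub y + gb y = ua y + ga y.
  by move=> Yy; exact: etrans (bY y Yy) (esym (aY y Yy)).
have gE : gb = ga.
  by apply: G_component_unique pub pua Ggb Gga _ => z /ZY; exact: agree.
subst gb; exists ub => //; split=> // [|y /agree]; last exact: addIr.
by apply: (@addIr _ (dnorm ga)); rewrite -!dnorm_perpD // /dnorm bn an.
Qed.

End MIdeal.

Lemma dim_le_subsingleton (A : set (X -> R)) n h :
  (forall b, A b -> b = h) -> dim_le A n.
Proof.
move=> Ah a /Ah ->; exists (fun _ _ => 0) => b /Ah ->.
by exists (fun _ => 0) => x; rewrite subrr big1 // => i _; rewrite mul0r.
Qed.

Lemma dim_le_affine_image (A B : set (X -> R)) n h (c : R) : dim_le A n ->
  (forall b, B b -> exists2 a, A a & b = (fun x => h x + c * a x)) ->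
  dim_le B n.
Proof.
move=> dA hB b0 /hB [a0 Aa0 ->]; have [gs hgs] := dA a0 Aa0.
exists gs => b /hB [a Aa ->]; have [cs hcs] := hgs a Aa.
exists (fun i => c * cs i) => x; rewrite opprD addrACA subrr add0r -mulrBr hcs.
by rewrite mulr_sumr; apply: eq_bigr => i _; rewrite mulrA.
Qed.

End Functionals.

Theorem theorem4p9 (R : realType) (X : completeNormedModType R) (k : nat)
  (Y Z : set X) :
  (0 < k)%N ->
  is_subspace Y -> closed Y -> is_subspace Z -> closed Z -> Z `<=` Y ->
  M_ideal Z ->
  propkU Y (qnorm Z) k ->
  propkU Y (fun x => `|x|) k.
Proof.
move=> _ sY _ sZ _ ZY [G [Gd [_ [Glin [_ [Gdec [Gperp GL]]]]]]] hq f _ _ a Ha.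
have [ua [ga [pua [Gga aE]]]] := Gdec a Ha.1; subst a.
have Hdec := HB_decomp Gd Glin Gdec Gperp GL ZY pua Gga Ha.
suff dimHB : dim_le (HB Y (fun x => `|x|) f) k.-1 by exact: dimHB _ Ha.
have [c_le0|c_gt0] := lerP (dnorm ua) 0.
  apply: (@dim_le_subsingleton _ _ _ _ ga) => b /Hdec [ub pub [-> ubn _]].
  by apply/funext => x; rewrite (dnorm_le0 pub.1) ?ubn // add0r.
set c := dnorm ua in c_gt0 Hdec.
have uaY : opnorm Y (fun x => `|x|) ua = c.
  apply: (opnorm_restrict_eq_dnorm (f := f) sY.1 pua.1 (Gd _ Gga)).
    by move=> y /Ha.2.1.
  by rewrite -(GL _ _ pua Gga) /dnorm Ha.2.2.
apply: (dim_le_affine_image (A := HB Y (qnorm Z) (fun x => ua x / c)) (h := ga) (c := c)).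
  apply: hq.
    exact: fun_on_subset (subsetT Y) (dual_qnorm_divr sZ c pua).
  exact: opnorm_qnorm_divr.
move=> b /Hdec [ub pub [-> ubn ubY]]; exists (fun x => ub x / c).
  exact: HB_qnorm_divr.
by apply/funext => x; rewrite mulrC divfK ?gt_eqF // addrC.
Qed.
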